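(* Let $\mathbb F$ be an algebraically closed field of characteristic not two. (a) The problem of classifying (up to isomorphism) finite-dimensional associative algebras $R$ (without identity) over $\mathbb F$ with $R^3=0$ and $\dim R^2=2$ is wild. (b) The problem of classifying (up to isomorphism) local finite-dimensional algebras $\Lambda$ over $\mathbb F$ with $(\operatorname{Rad}\Lambda)^3=0$ and $\dim(\operatorname{Rad}\Lambda)^2=2$ is wild.
   Context: An algebra without identity is a finite-dimensional vector space $R$ over $\mathbb F$ with a bilinear associative multiplication; $R^2$ (resp. $R^3$) is the subspace spanned by all products $uv$ (resp. $uvw$). An algebra $\Lambda$ with identity is local if the set of its noninvertible elements is closed under addition; this set is then the radical $\operatorname{Rad}\Lambda$. A classification problem is called wild if it contains the problem of classifying pairs of $n$-by-$n$ matrices up to simultaneous similarity $(A,B)\mapsto(S^{-1}AS,S^{-1}BS)$, i.e. there is an assignment of an object of the problem to each matrix pair such that two matrix pairs are similar iff the assigned objects are isomorphic. *)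

From HB Require Import structures.
From mathcomp Require Import all_boot all_order all_algebra.

Import GRing.Theory.
Local Open Scope ring_scope.

Section Algebras.
Variable F : fieldType.

(* A finite-dimensional F-algebra structure on F^d (row vectors), given by
   structure constants: e_i * e_j = acoef i j.  Bilinearity is built in;
   associativity is imposed separately. *)
Record alg := Alg { adim : nat; acoef : 'I_adim -> 'I_adim -> 'rV[F]_adim }.

Definition amul (R : alg) (x y : 'rV[F]_(adim R)) : 'rV[F]_(adim R) :=
  \sum_(i < adim R) \sum_(j < adim R) (x 0 i * y 0 j) *: acoef R i j.

Definition alg_assoc (R : alg) : Prop :=
  forall x y z, amul R (amul R x y) z = amul R x (amul R y z).

Definition inspan {d} (P : 'rV[F]_d -> Prop) (v : 'rV[F]_d) : Prop :=
  exists k (M : 'M[F]_(k, d)), (forall i, P (row i M)) /\ (v <= M)%MS.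

Definition span_dim {d} (P : 'rV[F]_d -> Prop) (k : nat) : Prop :=
  exists M : 'M[F]_(k, d), row_free M /\ (forall i, inspan P (row i M)) /\
    (forall v, inspan P v -> (v <= M)%MS).

Definition alg_iso (R S : alg) : Prop :=
  exists M : 'M[F]_(adim R, adim S), row_free M /\ row_full M /\
    forall x y, amul R x y *m M = amul S (x *m M) (y *m M).

Definition class_a (R : alg) : Prop :=
  alg_assoc R /\
  (forall u v w, amul R (amul R u v) w = 0) /\
  span_dim (fun w => exists u v, w = amul R u v) 2.

Record ualg := UAlg { ualg_alg :> alg; uone : 'rV[F]_(adim ualg_alg) }.

Definition is_identity (L : ualg) : Prop :=
  forall x, amul L (uone L) x = x /\ amul L x (uone L) = x.

Definition invertible (L : ualg) (x : 'rV[F]_(adim L)) : Prop :=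
  exists y, amul L x y = uone L /\ amul L y x = uone L.

(* Rad: the set of noninvertible elements *)
Definition rad (L : ualg) (x : 'rV[F]_(adim L)) : Prop := ~ invertible L x.

Definition is_local (L : ualg) : Prop :=
  forall x y, rad L x -> rad L y -> rad L (x + y).

Definition class_b (L : ualg) : Prop :=
  alg_assoc L /\ is_identity L /\ is_local L /\
  (forall u v w, rad L u -> rad L v -> rad L w -> amul L (amul L u v) w = 0) /\
  span_dim (fun w => exists u v, rad L u /\ rad L v /\ w = amul L u v) 2.

Definition ualg_iso (L L' : ualg) : Prop :=
  exists M : 'M[F]_(adim L, adim L'), row_free M /\ row_full M /\
    uone L *m M = uone L' /\
    forall x y, amul L x y *m M = amul L' (x *m M) (y *m M).

Definition similar_pairs {n} (A B A' B' : 'M[F]_n) : Prop :=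
  exists S : 'M[F]_n, S \in unitmx /\
    A' = invmx S *m A *m S /\ B' = invmx S *m B *m S.

Definition wild {T : Type} (P : T -> Prop) (iso : T -> T -> Prop) : Prop :=
  exists f : forall n, 'M[F]_n.+1 -> 'M[F]_n.+1 -> T,
    (forall n A B, P (f n A B)) /\
    (forall n (A B A' B' : 'M[F]_n.+1),
        similar_pairs A B A' B' <-> iso (f n A B) (f n A' B')) /\
    (forall n m (A B : 'M[F]_n.+1) (A' B' : 'M[F]_m.+1),
        n <> m -> ~ iso (f n A B) (f m A' B')).

End Algebras.

(* A pair of bilinear forms B_0, B_1 on V = F^v defines the algebra R = V + F^2 with
   (u, a) (w, b) = (0, (u B_0 w^T, u B_1 w^T)), so that R^3 = 0 and R^2 = F^2 as soon as
   the forms are linearly independent. An isomorphism between two such algebras preserves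
   R^2, hence is block triangular, and its diagonal blocks (P, G) satisfy
   P B'_l P^T = sum_k G_kl B_k: isomorphism is congruence of pencils of forms.
   To a matrix pair (A, B) of size k we attach B_0 = [0 I; 0 0] and B_1 = [0 E; D^T 0] on
   F^m + F^m, m = 3k, with E = diag(I_k, 0) and D an invertible matrix built from A and B.
   Rank counts force G to be triangular and P = diag(P_1, g P_1^-T); then P_1 E P_1^-1 is an
   idempotent of rank k in the span of I and E, hence equal to E, and P_1 D' P_1^-1 = D.
   Commuting with E and D makes P_1 = diag(S, S, S) with S A' = A S and S B' = B S.
   For (b), adjoin an identity: the unitization of such an R is local with radical R, and a
   unital isomorphism of unitizations restricts to an isomorphism of the radicals. *)

From Pilot Require Import Defs.
From mathcomp Require Import all_boot all_order all_algebra zify ring.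
Import GRing.Theory.
Local Open Scope ring_scope.
Set Implicit Arguments. Unset Strict Implicit.

Section MatrixFacts.
Variable F : fieldType.

Lemma mxrank_mul_units p (U X V : 'M[F]_p) : U \in unitmx -> V \in unitmx ->
  \rank (U *m X *m V) = \rank X.
Proof.
move=> uU uV; rewrite mxrankMfree ?row_free_unit //.
by rewrite (eqmxMfull X) // row_full_unit.
Qed.

Lemma rank_scalar_mx p (a : F) : \rank (a%:M : 'M_p) = if a == 0 then 0%N else p.
Proof.
have [-> | a0] := eqVneq a 0; first by rewrite raddf0 mxrank0.
by rewrite -scalemx1 mxrank_scale_nz // mxrank1.
Qed.

Lemma rank_antidiag_block_mx p (X Y : 'M[F]_p) :
  \rank (block_mx 0 X Y 0) = (\rank X + \rank Y)%N.
Proof.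
set sw : 'M[F]_(p + p) := block_mx 0 1%:M 1%:M 0.
have sw_unit : sw \in unitmx.
  have sw2 : sw *m sw = 1%:M.
    by rewrite /sw mulmx_block !mulmx0 !mul0mx !mulmx1 !addr0 !add0r -scalar_mx_block.
  by case: (mulmx1_unit sw2).
rewrite -(mxrankMfree _ (B := sw)) ?row_free_unit //.
by rewrite /sw mulmx_block !mulmx0 !mul0mx !mulmx1 !addr0 !add0r rank_diag_block_mx.
Qed.

Lemma diag_block_congruence p q (X : 'M[F]_p) (Y : 'M[F]_q) a b c d :
  block_mx X 0 0 Y *m block_mx a b c d *m (block_mx X 0 0 Y)^T =
  block_mx (X *m a *m X^T) (X *m b *m Y^T) (Y *m c *m X^T) (Y *m d *m Y^T).
Proof.
rewrite tr_block_mx !trmx0 !mulmx_block.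
by rewrite !mulmx0 !mul0mx !addr0 !add0r.
Qed.

Lemma linear_row_sum_delta d e (g : 'rV[F]_d -> 'rV[F]_e) :
  (forall a u w, g (a *: u + w) = a *: g u + g w) ->
  forall x, g x = \sum_i x 0 i *: g (delta_mx 0 i).
Proof.
move=> gP.
have g0 : g 0 = 0 by have := gP (-1) 0 0; rewrite scaler0 addr0 scaleN1r addNr.
have gD : {morph g : u w / u + w} by move=> u w; have := gP 1 u w; rewrite !scale1r.
move=> x; rewrite {1}(row_sum_delta x) (big_morph g gD g0).
by apply: eq_bigr => i _; have := gP (x 0 i) (delta_mx 0 i) 0; rewrite !addr0 g0 addr0.
Qed.

Lemma mulmx_delta_tr_entry p (M : 'M[F]_p) i j :
  ((delta_mx 0 i : 'rV_p) *m M *m (delta_mx 0 j : 'rV_p)^T) 0 0 = M i j.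
Proof. by rewrite -rowE trmx_delta -colE !mxE. Qed.

Lemma mul_row_diag_block1 p q (N : 'M[F]_(p, q)) a (r : 'rV[F]_p) :
  row_mx a%:M r *m block_mx 1%:M 0 0 N = row_mx a%:M (r *m N).
Proof. by rewrite mul_row_block !mulmx0 !addr0 mulmx1 add0r. Qed.

Lemma mul_row_block_tr p q (x1 x2 : 'rV[F]_p) (y1 y2 : 'rV[F]_q)
    (P : 'M[F]_p) (Q : 'M[F]_(p, q)) (R : 'M[F]_(q, p)) (S : 'M[F]_q) :
  row_mx x1 y1 *m block_mx P Q R S *m (row_mx x2 y2)^T =
  (x1 *m P + y1 *m R) *m x2^T + (x1 *m Q + y1 *m S) *m y2^T.
Proof. by rewrite mul_row_block tr_row_mx mul_row_col. Qed.

End MatrixFacts.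

Section Algebras.
Variable F : fieldType.

Definition alg_of_bilinear d (f : 'rV[F]_d -> 'rV[F]_d -> 'rV[F]_d) : alg F :=
  @Alg F d (fun i j => f (delta_mx 0 i) (delta_mx 0 j)).

Lemma amul_alg_of_bilinear d (f : 'rV[F]_d -> 'rV[F]_d -> 'rV[F]_d) :
  (forall a u w y, f (a *: u + w) y = a *: f u y + f w y) ->
  (forall a u w x, f x (a *: u + w) = a *: f x u + f x w) ->
  forall x y, amul F (alg_of_bilinear f) x y = f x y.
Proof.
move=> fPl fPr x y; rewrite /amul /=.
rewrite [RHS](linear_row_sum_delta (fun a u w => fPl a u w y)).
apply: eq_bigr => i _; rewrite (linear_row_sum_delta (fun a u w => fPr a u w _) y).
by rewrite scaler_sumr; apply: eq_bigr => j _; rewrite scalerA.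
Qed.

Section Bilinearity.
Variable R : alg F.
Local Notation am := (amul F R).

Lemma amulPl a u w y : am (a *: u + w) y = a *: am u y + am w y.
Proof.
rewrite /amul scaler_sumr -big_split; apply: eq_bigr => i _ /=.
rewrite scaler_sumr -big_split; apply: eq_bigr => j _ /=.
by rewrite !mxE scalerA -scalerDl mulrDl mulrA.
Qed.

Lemma amulPr a u w x : am x (a *: u + w) = a *: am x u + am x w.
Proof.
rewrite /amul scaler_sumr -big_split; apply: eq_bigr => i _ /=.
rewrite scaler_sumr -big_split; apply: eq_bigr => j _ /=.
by rewrite !mxE scalerA -scalerDl mulrDr mulrCA.
Qed.

Lemma amul0l y : am 0 y = 0.
Proof. by rewrite /amul big1 // => i _; rewrite big1 // => j _; rewrite mxE mul0r scale0r. Qed.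

Lemma amul0r x : am x 0 = 0.
Proof. by rewrite /amul big1 // => i _; rewrite big1 // => j _; rewrite mxE mulr0 scale0r. Qed.

Lemma amulZl a u y : am (a *: u) y = a *: am u y.
Proof. by rewrite -[a *: u]addr0 amulPl amul0l addr0. Qed.

Lemma amulZr a u x : am x (a *: u) = a *: am x u.
Proof. by rewrite -[a *: u]addr0 amulPr amul0r addr0. Qed.

Lemma amulDl u w y : am (u + w) y = am u y + am w y.
Proof. by rewrite -[u]scale1r amulPl !scale1r. Qed.

Lemma amulDr u w x : am x (u + w) = am x u + am x w.
Proof. by rewrite -[u]scale1r amulPr !scale1r. Qed.

End Bilinearity.

Lemma span_dim_basis d k (P : 'rV[F]_d -> Prop) (M : 'M[F]_(k, d)) :
  row_free M -> (forall i, P (row i M)) -> (forall v, P v -> (v <= M)%MS) ->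
  span_dim F P k.
Proof.
move=> fM PM HM; exists M; split=> //; split.
  move=> i; exists 1%N, (row i M); split; last exact: submx_refl.
  move=> j; have -> : row j (row i M) = row i M by apply/rowP=> t; rewrite !mxE.
  exact: PM.
move=> v [k' [M' [PM' vM']]]; apply: submx_trans vM' _.
by apply/row_subP => j; exact: HM (PM' j).
Qed.

Lemma span_dim_row_mx0 d e k (P : 'rV[F]_d -> Prop) (P' : 'rV[F]_(e + d) -> Prop) :
  span_dim F P k -> (forall w, P' w <-> exists p, P p /\ w = row_mx 0 p) ->
  span_dim F P' k.
Proof.
move=> [M [fM [MP PM]]] P'E.
exists (row_mx 0 M); split; first by rewrite /row_free rank_row_0mx.
split.
- move=> i; have [k' [M' [PM' iM']]] := MP i.
  exists k', (row_mx 0 M'); split.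
    by move=> j; apply/P'E; exists (row j M'); rewrite row_row_mx row0.
  rewrite row_row_mx row0; move/submxP: iM' => [D ->]; apply/submxP; exists D.
  by rewrite mul_mx_row mulmx0.
- move=> w [k' [M' [P'M' /submxP [D wE]]]].
  have rowM' j : P (rsubmx (row j M')) /\ lsubmx (row j M') = 0.
    by have [p [Pp ->]] := (P'E _).1 (P'M' j); rewrite row_mxKr row_mxKl.
  have lM'0 : lsubmx M' = 0.
    apply/row_matrixP => j; rewrite row0 -(rowM' j).2.
    by apply/rowP => t; rewrite !mxE.
  have rM'P j : P (row j (rsubmx M')).
    by have -> : row j (rsubmx M') = rsubmx (row j M');
      [apply/rowP => t; rewrite !mxE | exact: (rowM' j).1].
  have /submxP [E rwE] : (rsubmx w <= M)%MS.
    apply: PM; exists k', (rsubmx M'); split=> //.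
    by apply/submxP; exists D; rewrite wE mulmx_rsub.
  apply/submxP; exists E; rewrite mul_mx_row mulmx0 -rwE -{1}(hsubmxK w).
  by rewrite wE -mulmx_lsub lM'0 mulmx0.
Qed.

Lemma alg_iso_adim (R S : alg F) : alg_iso F R S -> adim F R = adim F S.
Proof. by move=> [M [/eqP fM [/eqP uM _]]]; exact: etrans (esym fM) uM. Qed.

Section FormAlgebra.
Variables (v : nat) (Bf : 'I_2 -> 'M[F]_v).

Definition form_pair (u w : 'rV[F]_v) : 'rV[F]_2 := \row_l (u *m Bf l *m w^T) 0 0.

Definition form_pair_full := forall l, exists u w, form_pair u w = delta_mx 0 l.

Definition form_mul (x y : 'rV[F]_(v + 2)) : 'rV[F]_(v + 2) :=
  row_mx 0 (form_pair (lsubmx x) (lsubmx y)).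

Definition form_alg : alg F := alg_of_bilinear form_mul.

Lemma form_pairPl a u u' w :
  form_pair (a *: u + u') w = a *: form_pair u w + form_pair u' w.
Proof.
apply/rowP=> l; rewrite !mxE !mulmxDl -!scalemxAl mulr_sumr -big_split /=.
by apply: eq_bigr => j _; rewrite !mxE mulrDl mulrA.
Qed.

Lemma form_pairPr a u w w' :
  form_pair u (a *: w + w') = a *: form_pair u w + form_pair u w'.
Proof.
apply/rowP=> l; rewrite !mxE mulr_sumr -big_split /=.
by apply: eq_bigr => j _; rewrite linearD linearZ /= !mxE mulrDr mulrCA.
Qed.

Lemma form_pair0l w : form_pair 0 w = 0.
Proof.
apply/rowP=> l; rewrite !mxE big1 // => j _.
by rewrite !mxE big1 ?mul0r // => i _; rewrite mxE mul0r.
Qed.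

Lemma form_pair0r u : form_pair u 0 = 0.
Proof. by apply/rowP=> l; rewrite !mxE big1 // => j _; rewrite !mxE mulr0. Qed.

Lemma amul_form_alg x y : amul F form_alg x y = form_mul x y.
Proof.
apply: amul_alg_of_bilinear => a u w z; rewrite /form_mul linearP /=.
  by rewrite form_pairPl scale_row_mx add_row_mx scaler0 addr0.
by rewrite form_pairPr scale_row_mx add_row_mx scaler0 addr0.
Qed.

Lemma form_mul0l x y z : form_mul (form_mul x y) z = 0.
Proof. by rewrite /form_mul row_mxKl form_pair0l row_mx0. Qed.

Lemma form_mul0r x y z : form_mul x (form_mul y z) = 0.
Proof. by rewrite /form_mul row_mxKl form_pair0r row_mx0. Qed.

Lemma form_alg_class_a : form_pair_full -> class_a F form_alg.
Proof.
move=> Bf_full; split; [|split].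
- by move=> x y z; rewrite !amul_form_alg form_mul0l form_mul0r.
- by move=> x y z; rewrite !amul_form_alg form_mul0l.
apply: (@span_dim_basis _ _ _ (row_mx 0 1%:M)).
- by rewrite /row_free rank_row_0mx mxrank1.
- move=> l; have [u [w uwE]] := Bf_full l.
  exists (row_mx u 0), (row_mx w 0).
  rewrite amul_form_alg /form_mul !row_mxKl uwE row_row_mx row0 rowE mulmx1.
  by congr row_mx; apply/rowP => t; rewrite !mxE.
move=> z [x [y ->]]; rewrite amul_form_alg; apply/submxP.
by exists (form_pair (lsubmx x) (lsubmx y)); rewrite mul_mx_row mulmx0 mulmx1.
Qed.

End FormAlgebra.

Lemma form_alg_iso_congr v (Bf Bf' : 'I_2 -> 'M[F]_v) :
  form_pair_full Bf -> alg_iso F (form_alg Bf) (form_alg Bf') ->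
  exists (P : 'M[F]_v) (G : 'M[F]_2), P \in unitmx /\
    forall l, P *m Bf' l *m P^T = \sum_k G k l *: Bf k.
Proof.
move=> Bf_full [M [fM [_ MM]]].
have {}MM x y : form_mul Bf x y *m M = form_mul Bf' (x *m M) (y *m M).
  by rewrite -!amul_form_alg.
move: fM MM; rewrite -(submxK M).
set P := ulsubmx M; set Q := ursubmx M; set C := dlsubmx M; set G := drsubmx M.
move=> fM MM.
have MM0 u w : row_mx 0 (form_pair Bf u w) *m block_mx P Q C G =
    form_mul Bf' (row_mx u 0 *m block_mx P Q C G) (row_mx w 0 *m block_mx P Q C G).
  by rewrite -MM /form_mul !row_mxKl.
have C0 : C = 0.
  apply/row_matrixP => l; rewrite row0 rowE; have [u [w <-]] := Bf_full l.
  by have := MM0 u w; rewrite /form_mul !mul_row_block !mul0mx !add0r => /eq_row_mx [].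
have GE u w : form_pair Bf u w *m G = form_pair Bf' (u *m P) (w *m P).
  have := MM0 u w; rewrite /form_mul !mul_row_block !mul0mx !add0r C0 !mulmx0 !addr0.
  by rewrite !row_mxKl => /eq_row_mx [].
move: fM; rewrite C0 row_free_unit unitmxE det_ublock unitrM -!unitmxE => /andP [uP _].
exists P, G; split=> // l; apply/matrixP => i j.
rewrite -mulmx_delta_tr_entry -!mulmxA mulmxA mulmxA -trmx_mul.
have := congr1 (fun r : 'rV_2 => r 0 l) (GE (delta_mx 0 i) (delta_mx 0 j)).
rewrite /= mxE [form_pair Bf' _ _ 0 l]mxE => <-.
rewrite summxE; apply: eq_bigr => k _.
by rewrite [form_pair _ _ _ _ _]mxE mulmx_delta_tr_entry [RHS]mxE mulrC.
Qed.

Lemma form_alg_iso_of_congr v (Bf Bf' : 'I_2 -> 'M[F]_v) (P : 'M[F]_v) :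
  P \in unitmx -> (forall l, P *m Bf' l *m P^T = Bf l) ->
  alg_iso F (form_alg Bf) (form_alg Bf').
Proof.
move=> uP PBf; set M : 'M_(v + 2) := block_mx P 0 0 1%:M.
have uM : M \in unitmx by rewrite unitmxE det_ublock det1 mulr1 -unitmxE.
exists M; rewrite row_free_unit row_full_unit; do 2!split=> //.
move=> x y; rewrite !amul_form_alg /form_mul -[x]hsubmxK -[y]hsubmxK.
rewrite !mul_row_block !row_mxKl !mul0mx !mulmx0 !addr0 !add0r mulmx1.
congr row_mx; apply/rowP=> l.
by rewrite [LHS]mxE [RHS]mxE -PBf trmx_mul !mulmxA.
Qed.

Section Unitization.
Variable R : alg F.
Local Notation d := (adim F R).
Local Notation am := (amul F R).

Definition uscal (x : 'rV[F]_(1 + d)) : F := lsubmx x 0 0.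

Definition unit_mul (x y : 'rV[F]_(1 + d)) : 'rV[F]_(1 + d) :=
  row_mx (uscal x * uscal y)%:M
    (uscal x *: rsubmx y + uscal y *: rsubmx x + am (rsubmx x) (rsubmx y)).

Definition unit_one : 'rV[F]_(1 + d) := row_mx 1%:M 0.

Definition unitization : ualg F := @UAlg F (alg_of_bilinear unit_mul) unit_one.

Lemma uscal_row a r : uscal (row_mx a%:M r) = a.
Proof. by rewrite /uscal row_mxKl mxE mulr1n. Qed.

Lemma row_mx_uscal x : x = row_mx (uscal x)%:M (rsubmx x).
Proof.
rewrite -{1}(hsubmxK x); congr row_mx; apply/rowP => i.
by rewrite ord1 /uscal !mxE mulr1n.
Qed.

Lemma unit_mulE a r b s : unit_mul (row_mx a%:M r) (row_mx b%:M s) =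
  row_mx (a * b)%:M (a *: s + b *: r + am r s).
Proof. by rewrite /unit_mul !uscal_row !row_mxKr. Qed.

Lemma unit_mul_row0 r s : unit_mul (row_mx 0 r) (row_mx 0 s) = row_mx 0 (am r s).
Proof.
by rewrite -(raddf0 (@scalar_mx F 1)) unit_mulE mulr0 !scale0r !add0r.
Qed.

Lemma uscalD u w : uscal (u + w) = uscal u + uscal w.
Proof. by rewrite /uscal linearD !mxE. Qed.

Lemma uscalP c u w : uscal (c *: u + w) = c * uscal u + uscal w.
Proof. by rewrite /uscal linearP !mxE. Qed.

Lemma unit_mulPl c u w y : unit_mul (c *: u + w) y = c *: unit_mul u y + unit_mul w y.
Proof.
rewrite /unit_mul uscalP linearP /= amulPl scale_row_mx add_row_mx; congr row_mx.
  by apply/matrixP=> i j; rewrite !ord1 !mxE eqxx !mulr1n; ring.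
by apply/rowP => j; rewrite !mxE; ring.
Qed.

Lemma unit_mulPr c u w y : unit_mul y (c *: u + w) = c *: unit_mul y u + unit_mul y w.
Proof.
rewrite /unit_mul uscalP linearP /= amulPr scale_row_mx add_row_mx; congr row_mx.
  by apply/matrixP=> i j; rewrite !ord1 !mxE eqxx !mulr1n; ring.
by apply/rowP => j; rewrite !mxE; ring.
Qed.

Lemma amul_unitization x y : amul F unitization x y = unit_mul x y.
Proof. by apply: amul_alg_of_bilinear; [exact: unit_mulPl | exact: unit_mulPr]. Qed.

Lemma unitization_assoc : alg_assoc F R -> alg_assoc F unitization.
Proof.
move=> R_assoc x y z; rewrite !amul_unitization.
rewrite (row_mx_uscal x) (row_mx_uscal y) (row_mx_uscal z) !unit_mulE.
rewrite !amulDr !amulDl !amulZr !amulZl R_assoc mulrA; congr row_mx.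
by apply/rowP => j; rewrite !mxE; ring.
Qed.

Lemma unitization_identity : is_identity F unitization.
Proof.
move=> x; rewrite !amul_unitization (row_mx_uscal x) /= /unit_one !unit_mulE.
rewrite amul0l amul0r mul1r mulr1.
by split; congr row_mx; apply/rowP => j; rewrite !mxE; ring.
Qed.

Section CubeZero.
Hypotheses (R_assoc : alg_assoc F R) (R_cube0 : forall u v w, am (am u v) w = 0).

Lemma unitization_invertible (x : 'rV[F]_(1 + d)) :
  Defs.invertible F unitization x <-> uscal x != 0.
Proof.
split.
  move=> [y [+ _]]; rewrite amul_unitization => /(congr1 uscal).
  rewrite /unit_mul /unit_one !uscal_row => xy1; apply/eqP => x0.
  by move: xy1; rewrite x0 mul0r => /eqP; rewrite eq_sym oner_eq0.
set a := uscal x; set r := rsubmx x => a0.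
have r3 : am r (am r r) = 0 by rewrite -R_assoc R_cube0.
exists (row_mx (a^-1)%:M ((- (a^-1 * a^-1)) *: r + (a^-1 * a^-1 * a^-1) *: am r r)).
rewrite !amul_unitization /= (row_mx_uscal x) -/a -/r !unit_mulE.
rewrite !amulDr !amulDl !amulZr !amulZl r3 R_cube0 /unit_one mulfV // mulVf //.
by split; congr row_mx; apply/rowP => j; rewrite !mxE; field.
Qed.

Lemma unitization_rad (x : 'rV[F]_(1 + d)) : Defs.rad F unitization x <-> uscal x = 0.
Proof.
rewrite /Defs.rad unitization_invertible.
by split=> [/negP/negbNE/eqP | -> /eqP].
Qed.

Lemma unitization_rad_row0 r : Defs.rad F unitization (row_mx 0 r).
Proof. by apply/unitization_rad; rewrite /uscal row_mxKl mxE. Qed.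

Lemma unitization_radE (x : 'rV[F]_(1 + d)) :
  Defs.rad F unitization x -> x = row_mx 0 (rsubmx x).
Proof.
move=> /unitization_rad x0; rewrite {1}(row_mx_uscal x); congr row_mx.
by apply/matrixP => i j; rewrite !mxE x0 mul0rn.
Qed.

End CubeZero.

Lemma class_b_unitization : class_a F R -> class_b F unitization.
Proof.
move=> [R_assoc [R_cube0 R2_dim]].
have radE := unitization_radE R_assoc R_cube0.
split; [exact: unitization_assoc|]; split; [exact: unitization_identity|].
split.
  move=> x y /(unitization_rad R_assoc R_cube0) x0 /(unitization_rad R_assoc R_cube0) y0.
  by apply/(unitization_rad R_assoc R_cube0); rewrite uscalD x0 y0 addr0.
split.
  move=> u v w /radE -> /radE -> /radE ->.
  by rewrite !amul_unitization /= !unit_mul_row0 R_cube0 row_mx0.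
apply: (span_dim_row_mx0 R2_dim) => w; split.
  move=> [u [v [/radE uE [/radE vE ->]]]].
  rewrite amul_unitization uE vE unit_mul_row0.
  by exists (amul F R (rsubmx u) (rsubmx v)); split; first by exists (rsubmx u), (rsubmx v).
move=> [p [[r [s ->]] ->]].
exists (row_mx 0 r), (row_mx 0 s); rewrite amul_unitization unit_mul_row0.
by split; [|split]; first [exact: unitization_rad_row0 | done].
Qed.

End Unitization.

Lemma ualg_iso_unitization (R S : alg F) :
  alg_iso F R S -> ualg_iso F (unitization R) (unitization S).
Proof.
move=> [N [fN [uN NM]]].
exists (block_mx 1%:M 0 0 N : 'M_(1 + adim F R, 1 + adim F S)).
move: fN uN; rewrite /row_free /row_full => fN uN.
rewrite rank_diag_block_mx mxrank1 !eqn_add2l fN uN; do 2!split=> //.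
split; first by rewrite /= /unit_one mul_row_diag_block1 mul0mx.
move=> x y; rewrite !amul_unitization /= (row_mx_uscal x) (row_mx_uscal y).
rewrite !unit_mulE !mul_row_diag_block1 unit_mulE.
by rewrite !mulmxDl -!scalemxAl NM.
Qed.

Lemma ualg_iso_adim (R S : alg F) :
  ualg_iso F (unitization R) (unitization S) -> adim F R = adim F S.
Proof.
move=> [M [/eqP fM [/eqP uM _]]].
by apply/eqP; rewrite -(eqn_add2l 1); apply/eqP; exact: etrans (esym fM) uM.
Qed.

Lemma ualg_iso_unitization_block (R S : alg F)
    (M : 'M[F]_(1 + adim F R, 1 + adim F S)) :
  class_a F R -> class_a F S -> row_free M -> row_full M ->
  unit_one R *m M = unit_one S ->
  (forall x y, unit_mul x y *m M = unit_mul (x *m M) (y *m M)) ->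
  M = block_mx 1%:M 0 0 (drsubmx M).
Proof.
move=> [R_assoc [R_cube0 _]] [S_assoc [S_cube0 _]] fM uM M1 MM.
have rad_image x : Defs.rad F (unitization R) x -> Defs.rad F (unitization S) (x *m M).
  move=> radx [z [xz zx]]; apply: radx; have /submxP [y zE] := submx_full z uM.
  move: xz zx; rewrite !amul_unitization /= zE -!MM -M1 => xy yx.
  by exists y; rewrite !amul_unitization; split; apply: (row_free_inj fM).
have [M11 M12] : ulsubmx M = 1%:M /\ ursubmx M = 0.
  move: M1; rewrite -[M in _ *m M]submxK /unit_one mul_row_block.
  by rewrite !mul0mx !addr0 !mul1mx => /eq_row_mx.
have M21 : dlsubmx M = 0.
  apply/row_matrixP => i; rewrite row0; apply/rowP => j; rewrite ord1 mxE.
  have := rad_image _ (unitization_rad_row0 R_assoc R_cube0 (r := delta_mx 0 i)).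
  move/(unitization_rad S_assoc S_cube0); rewrite -[M]submxK block_mxKdl.
  by rewrite mul_row_block mul0mx add0r /uscal row_mxKl -rowE !mxE.
by rewrite -[LHS]submxK M11 M12 M21.
Qed.

Lemma alg_iso_of_ualg_iso (R S : alg F) : class_a F R -> class_a F S ->
  ualg_iso F (unitization R) (unitization S) -> alg_iso F R S.
Proof.
move=> aR aS [M [fM [uM [M1 MMa]]]].
have MM x y : unit_mul x y *m M = unit_mul (x *m M) (y *m M).
  by have := MMa x y; rewrite !amul_unitization.
have ME := ualg_iso_unitization_block aR aS fM uM M1 MM.
move: fM uM MMa; rewrite ME /row_free /row_full rank_diag_block_mx mxrank1 !eqn_add2l.
move=> fN uN {}MM; exists (drsubmx M); do 2!split=> //.
move=> r s; have := MM (row_mx 0 r) (row_mx 0 s); rewrite !amul_unitization /=.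
rewrite unit_mul_row0 !mul_row_block !mulmx0 !mul0mx !addr0 !add0r unit_mul_row0.
by move=> /eq_row_mx [].
Qed.

End Algebras.

Local Ltac mxsimp :=
  do 3 rewrite ?trmx0 ?mulmx0 ?mul0mx ?mulmx1 ?mul1mx ?addr0 ?add0r ?row_mx0 ?col_mx0.

Section Construction.
Variables (F : fieldType) (n : nat).
Local Notation k := n.+1.
Local Notation m := (k + (k + k))%N.
Local Notation v := (m + m)%N.

Definition Emx : 'M[F]_m := block_mx 1%:M 0 0 0.

Definition Dmx (A B : 'M[F]_k) : 'M[F]_m :=
  block_mx A (row_mx 1%:M 0) (col_mx 0 1%:M) (block_mx 0 1%:M 0 B).

Definition form0 : 'M[F]_v := block_mx 0 1%:M 0 0.
Definition form1 A B : 'M[F]_v := block_mx 0 Emx (Dmx A B)^T 0.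
Definition pair_forms A B (l : 'I_2) : 'M[F]_v := if val l == 0%N then form0 else form1 A B.

Definition i0 : 'I_m := lshift (k + k) ord0.
Definition i1 : 'I_m := rshift k (lshift k ord0).

Lemma Dmx_unit A B : Dmx A B \in unitmx.
Proof.
pose Dinv := block_mx 0 (row_mx (- B) 1%:M) (col_mx 1%:M 0) (block_mx (A *m B) (- A) 1%:M 0).
have DDinv : Dmx A B *m Dinv = 1%:M.
  rewrite /Dmx /Dinv mulmx_block !mulmx0 !add0r mul_mx_row mul_row_col.
  rewrite mul_row_block mul_block_col mul_col_row mulmx_block.
  rewrite !mulmx0 !mul0mx !mul1mx !mulmx1 !addr0 !add0r mulmxN add_row_mx.
  rewrite addNr addrN row_mx0 add_block_mx !addr0 !add0r.
  by rewrite col_mx0 addNr [RHS](scalar_mx_block k (k + k)) (scalar_mx_block k k).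
by case: (mulmx1_unit DDinv).
Qed.

Lemma pair_forms_full A B : form_pair_full (pair_forms A B).
Proof.
have Dmx01 : Dmx A B i0 i1 = 1.
  by rewrite /Dmx /i0 /i1 block_mxEur row_mxEl mxE.
have Emx11 : Emx i1 i1 = 0 by rewrite /Emx /i1 block_mxEdr mxE.
pose e i : 'rV[F]_m := delta_mx 0 i.
case=> [[|[|l]] lt_l2] //.
- exists (row_mx (e i1) 0), (row_mx 0 (e i1)); apply/rowP => j; rewrite mxE.
  case: j => [[|[|j]] lt_j2] //=; rewrite [RHS]mxE /= /pair_forms /= mul_row_block_tr; mxsimp.
    by rewrite trmx_delta mul_delta_mx mxE.
  by rewrite mulmx_delta_tr_entry Emx11.
- exists (row_mx 0 (e i1)), (row_mx (e i0) 0); apply/rowP => j; rewrite mxE.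
  case: j => [[|[|j]] lt_j2] //=; rewrite [RHS]mxE /= /pair_forms /= mul_row_block_tr; mxsimp.
    by rewrite mxE.
  by rewrite mulmx_delta_tr_entry mxE Dmx01.
Qed.

Lemma Emx_idem : Emx *m Emx = Emx.
Proof. by rewrite /Emx mulmx_block; mxsimp. Qed.

(* [\rank] reads its argument in %MS, where [+] is the sum of row spaces. *)
Lemma rank_Emx_combo c d :
  \rank (c *: 1%:M + d *: Emx)%R =
  ((if (c + d == 0)%R then 0 else k) + (if (c == 0)%R then 0 else k + k))%N.
Proof.
rewrite /Emx (scalar_mx_block k (k + k)) !scale_block_mx !scaler0.
rewrite add_block_mx !addr0 -scalerDl !scalemx1 rank_diag_block_mx.
by rewrite !rank_scalar_mx.
Qed.

Lemma conj_Emx_combo (U : 'M[F]_m) c d : U \in unitmx ->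
  U *m Emx *m invmx U = c *: 1%:M + d *: Emx -> c = 0 /\ d = 1.
Proof.
move=> uU UE.
have rk : \rank (c *: 1%:M + d *: Emx)%R = k.
  rewrite -UE mxrank_mul_units ?unitmx_inv //.
  by rewrite /Emx rank_diag_block_mx mxrank1 mxrank0 addn0.
have c0 : c = 0.
  apply/eqP/negPn/negP => c_nz; move: rk; rewrite rank_Emx_combo (negPf c_nz).
  by case: ifP => _; lia.
have idem : (c *: 1%:M + d *: Emx) *m (c *: 1%:M + d *: Emx) = c *: 1%:M + d *: Emx.
  by rewrite -UE -!mulmxA (mulKmx uU) (mulmxA Emx) Emx_idem.
move: idem rk; rewrite rank_Emx_combo c0 eqxx addn0 scale0r !add0r.
rewrite -scalemxAl -scalemxAr Emx_idem scalerA; case: eqP => [_ _ /eqP //|/eqP d0 ddE _].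
have Emx_entry a : (a *: Emx) i0 i0 = a.
  by rewrite mxE /Emx /i0 block_mxEul mxE eqxx mulr1.
move/(congr1 (fun M : 'M[F]_m => M i0 i0)): ddE; rewrite /= !Emx_entry => dd.
by split=> //; apply: (mulIf d0); rewrite mul1r.
Qed.

Lemma sum_pair_forms A B (G : 'M[F]_2) l :
  \sum_j G j l *: pair_forms A B j =
  block_mx 0 (G ord0 l *: 1%:M + G ord_max l *: Emx) (G ord_max l *: (Dmx A B)^T) 0.
Proof.
rewrite big_ord_recr big_ord1 /pair_forms /= /form0 /form1.
rewrite !scale_block_mx add_block_mx !scaler0.
by mxsimp; congr (block_mx _ (G _ l *: _ + _) _ _); apply: val_inj.
Qed.

Lemma rank_form_combo A B g h :
  \rank (block_mx 0 (g *: 1%:M + h *: Emx)%R (h *: (Dmx A B)^T) 0 : 'M_v) = m ->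
  h = 0 /\ g != 0.
Proof.
rewrite rank_antidiag_block_mx; have [h0 | h_nz] := eqVneq h 0.
  rewrite h0 !scale0r addr0 mxrank0 addn0 => rk; split=> //.
  by apply/eqP => g0; move: rk; rewrite g0 scale0r mxrank0; lia.
rewrite (mxrank_scale_nz _ h_nz) mxrank_tr (mxrank_unit (Dmx_unit A B)) rank_Emx_combo.
have [g0 | _] := eqVneq g 0; last by case: ifP => _; lia.
by rewrite g0 add0r (negPf h_nz); lia.
Qed.

Lemma form0_congr_block (P : 'M[F]_v) g : g != 0 -> P *m form0 *m P^T = g *: form0 ->
  exists P1 P2 : 'M[F]_m, [/\ P = block_mx P1 0 0 P2, P1 \in unitmx & P2^T = g *: invmx P1].
Proof.
move=> g_nz; rewrite -[P]submxK /form0 tr_block_mx scale_block_mx !scaler0.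
rewrite !mulmx_block; mxsimp => /eq_block_mx [P1P12 P1P2 _ P21P2].
set P1 := ulsubmx P in P1P12 P1P2 *; set P2 := drsubmx P in P1P2 P21P2 *.
have P1inv : P1 *m (g^-1 *: P2^T) = 1%:M.
  by rewrite -scalemxAr P1P2 scalerA mulVf // scale1r.
have [uP1 uP2] := mulmx1_unit P1inv.
exists P1, P2; split=> //; last first.
  by rewrite -(mulKmx uP1 P2^T) P1P2 -scalemxAr mulmx1.
have -> : ursubmx P = 0.
  by apply: trmx_inj; rewrite trmx0 -(mulKmx uP1 (ursubmx P)^T) P1P12 mulmx0.
have -> : dlsubmx P = 0.
  by rewrite -(mulmxK uP2 (dlsubmx P)) -scalemxAr P21P2 scaler0 mul0mx.
done.
Qed.

Lemma Emx_commute_block (Q : 'M[F]_m) : Q *m Emx = Emx *m Q ->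
  Q = block_mx (ulsubmx Q) 0 0 (drsubmx Q).
Proof.
rewrite -[Q]submxK /Emx !mulmx_block; mxsimp => /eq_block_mx [_ -> <- _].
by rewrite block_mxKul block_mxKdr.
Qed.

Lemma Dmx_commute_block (Q1 : 'M[F]_k) (Q2 : 'M[F]_(k + k)) A B A' B' :
  block_mx Q1 0 0 Q2 *m Dmx A' B' = Dmx A B *m block_mx Q1 0 0 Q2 ->
  Q1 *m A' = A *m Q1 /\ Q1 *m B' = B *m Q1.
Proof.
rewrite -[Q2]submxK /Dmx !mulmx_block; mxsimp.
rewrite ?mul_mx_row ?mul_block_col ?mul_row_block ?mul_col_mx ?mulmx_block; mxsimp.
case/eq_block_mx => QA _ /eq_col_mx [_ Q22] /eq_block_mx [Q21 _ _ QB].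
by move: QB; rewrite -Q21 Q22 add0r.
Qed.

Lemma similar_of_commute A B A' B' (Q : 'M[F]_m) : Q \in unitmx ->
  Q *m Emx = Emx *m Q -> Q *m Dmx A' B' = Dmx A B *m Q -> similar_pairs F A B A' B'.
Proof.
move=> uQ /Emx_commute_block QE; rewrite QE => /Dmx_commute_block [QA QB].
move: uQ; rewrite QE unitmxE det_ublock unitrM -!unitmxE => /andP [uQ1 _].
by exists (ulsubmx Q); rewrite -!mulmxA -QA -QB !mulKmx.
Qed.

Lemma similar_of_pair_forms_congr A B A' B' (P : 'M[F]_v) (G : 'M[F]_2) :
  P \in unitmx ->
  (forall l, P *m pair_forms A' B' l *m P^T = \sum_j G j l *: pair_forms A B j) ->
  similar_pairs F A B A' B'.
Proof.
move=> uP PG; set g := G ord0 ord0.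
have [G10 g_nz] : G ord_max ord0 = 0 /\ g != 0.
  apply: (@rank_form_combo A B); rewrite -sum_pair_forms -PG mxrank_mul_units ?unitmx_tr //.
  by rewrite /pair_forms /= /form0 rank_antidiag_block_mx mxrank1 mxrank0 addn0.
have PBf0 : P *m form0 *m P^T = g *: form0.
  have := PG ord0; rewrite sum_pair_forms G10 !scale0r addr0 /pair_forms /= => ->.
  by rewrite /form0 scale_block_mx !scaler0.
have [P1 [P2 [PE uP1 P2E]]] := form0_congr_block g_nz PBf0.
have := PG ord_max; rewrite sum_pair_forms PE /pair_forms /= /form1 diag_block_congruence.
case/eq_block_mx => _ P1E P2D _.
have P1conj : P1 *m Emx *m invmx P1 =
    (g^-1 * G ord0 ord_max) *: 1%:M + (g^-1 * G ord_max ord_max) *: Emx.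
  by rewrite -!scalerA -scalerDr -P1E P2E -scalemxAr scalerA mulVf ?scale1r.
have [G01 G11] := conj_Emx_combo uP1 P1conj.
have G11g : G ord_max ord_max = g.
  by apply: (mulfI (invr_neq0 g_nz)); rewrite G11 mulVf.
apply: (similar_of_commute uP1).
  by rewrite -[P1 *m Emx](mulmxKV uP1) P1conj G01 G11 scale0r add0r scale1r.
apply: (canRL (mulmxKV uP1)); apply: (scalerI g_nz).
rewrite scalemxAr -P2E -G11g; apply: trmx_inj.
by rewrite !trmx_mul trmxK mulmxA P2D linearZ.
Qed.

Lemma pair_forms_congr_of_similar A B A' B' : similar_pairs F A B A' B' ->
  exists2 P : 'M[F]_v, P \in unitmx &
    forall l, P *m pair_forms A' B' l *m P^T = pair_forms A B l.
Proof.
move=> [S [uS [A'E B'E]]].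
have SA : S *m A' = A *m S by rewrite A'E !mulmxA mulmxV // mul1mx.
have SB : S *m B' = B *m S by rewrite B'E !mulmxA mulmxV // mul1mx.
set Q : 'M[F]_m := block_mx S 0 0 (block_mx S 0 0 S).
have uQ : Q \in unitmx by rewrite !unitmxE !det_ublock !unitrM -!unitmxE uS.
have QE : Q *m Emx = Emx *m Q by rewrite /Emx !mulmx_block; mxsimp.
have QD : Q *m Dmx A' B' = Dmx A B *m Q.
  rewrite /Dmx !mulmx_block; mxsimp.
  rewrite ?mul_mx_row ?mul_block_col ?mul_row_block ?mul_col_mx ?mulmx_block.
  by mxsimp; rewrite SA SB.
exists (block_mx Q 0 0 (invmx Q)^T).
  by rewrite unitmxE det_ublock unitrM -!unitmxE unitmx_tr unitmx_inv uQ.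
case=> [[|[|l]] lt_l2] //; rewrite /pair_forms /=.
  by rewrite /form0 diag_block_congruence; mxsimp; rewrite trmxK mulmxV.
rewrite /form1 diag_block_congruence; mxsimp; rewrite trmxK QE -mulmxA mulmxV // mulmx1.
by rewrite -!trmx_mul mulmxA QD -mulmxA mulmxV // mulmx1.
Qed.

End Construction.

Lemma wild_class_a (F : fieldType) : wild F (class_a F) (alg_iso F).
Proof.
exists (fun n A B => form_alg (pair_forms A B)); split; [|split].
- by move=> n A B; apply/form_alg_class_a/pair_forms_full.
- move=> n A B A' B'; split.
    by case/pair_forms_congr_of_similar => P uP PB; exact: form_alg_iso_of_congr uP PB.
  case/(form_alg_iso_congr (pair_forms_full A B)) => P [G [uP PG]].
  exact: similar_of_pair_forms_congr uP PG.
- by move=> n m A B A' B' nm /alg_iso_adim /=; lia.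
Qed.

Lemma wild_class_b (F : fieldType) : wild F (class_b F) (ualg_iso F).
Proof.
exists (fun n A B => unitization (form_alg (pair_forms A B))); split; [|split].
- by move=> n A B; apply/class_b_unitization/form_alg_class_a/pair_forms_full.
- move=> n A B A' B'; split.
    case/pair_forms_congr_of_similar => P uP PB.
    exact/ualg_iso_unitization/(form_alg_iso_of_congr uP PB).
  move/(alg_iso_of_ualg_iso (form_alg_class_a (pair_forms_full A B))
                            (form_alg_class_a (pair_forms_full A' B'))).
  case/(form_alg_iso_congr (pair_forms_full A B)) => P [G [uP PG]].
  exact: similar_of_pair_forms_congr uP PG.
- by move=> n m A B A' B' nm /ualg_iso_adim /=; lia.
Qed.

Theorem theorem3p1 (F : closedFieldType) :
  ~~ (2%N \in [pchar F]) ->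
  wild F (class_a F) (alg_iso F) /\ wild F (class_b F) (ualg_iso F).
Proof. by move=> _; split; [exact: wild_class_a | exact: wild_class_b]. Qed.
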